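(* Let $P$ be a finite poset and $R$ a commutative unital ring. If $D$ is a derivation of $I^3(P,R)$, then $D=0$.
   Context: For a finite poset $P$, let $P^3_\le=\{(x,y,z)\in P^3: x\le y\le z\}$. The third partial flag incidence algebra $I^3(P,R)$ is the $R$-module of all functions $f:P^3_\le\to R$ (pointwise operations) with the (non-associative) multiplication $(fg)(x_1,x_2,x_3)=\sum f(x_1,y_1,y_2)\,g(y_1,y_2,x_3)$, the sum over all $y_1,y_2$ with $x_1\le y_1\le x_2\le y_2\le x_3$. A derivation of $I^3(P,R)$ is an $R$-linear map $D:I^3(P,R)\to I^3(P,R)$ such that $D(fg)=D(f)g+fD(g)$ for all $f,g$. *)

From HB Require Import structures.
From mathcomp Require Import all_boot all_order all_algebra.
Set Implicit Arguments. Unset Strict Implicit. Unset Printing Implicit Defensive.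
Import Order.TTheory GRing.Theory.
Local Open Scope order_scope.

Definition chain3 {d : Order.disp_t} (P : finPOrderType d) (t : P * P * P) : bool :=
  (t.1.1 <= t.1.2) && (t.1.2 <= t.2).

Definition P3 {d : Order.disp_t} (P : finPOrderType d) :=
  {t : P * P * P | chain3 t}.

Definition I3 {d : Order.disp_t} (P : finPOrderType d) (R : comPzRingType) :=
  {ffun P3 P -> R}.

Local Open Scope ring_scope.

(* the value of f at (x,y,z), with 0 off P^3_<= (only used inside the product,
   where the summation condition guarantees (x,y,z) in P^3_<=) *)
Definition I3at {d : Order.disp_t} {P : finPOrderType d} {R : comPzRingType}
  (f : I3 P R) (x y z : P) : R :=
  match boolP (chain3 (x, y, z)) with
  | AltTrue h => f (exist _ (x, y, z) h)
  | AltFalse _ => 0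
  end.

Definition I3mul {d : Order.disp_t} {P : finPOrderType d} {R : comPzRingType}
  (f g : I3 P R) : I3 P R :=
  [ffun t : P3 P =>
     let: (x1, x2, x3) := sval t in
     \sum_(y1 : P | (x1 <= y1)%O && (y1 <= x2)%O)
       \sum_(y2 : P | (x2 <= y2)%O && (y2 <= x3)%O)
         I3at f x1 y1 y2 * I3at g y1 y2 x3].

Definition is_derivation {d : Order.disp_t} {P : finPOrderType d} {R : comPzRingType}
  (D : I3 P R -> I3 P R) : Prop :=
  [/\ (forall f g : I3 P R, D [ffun t : P3 P => f t + g t] = [ffun t : P3 P => D f t + D g t]),
      (forall (r : R) (f : I3 P R), D [ffun t : P3 P => r * f t] = [ffun t : P3 P => r * D f t])
    & (forall f g : I3 P R, D (I3mul f g) = I3mul (D f) g + I3mul f (D g))].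

From HB Require Import structures.
From mathcomp Require Import all_boot all_order all_algebra ring.
Set Implicit Arguments. Unset Strict Implicit. Unset Printing Implicit Defensive.
Import Order.TTheory GRing.Theory.
Local Open Scope ring_scope.

(* The indicator functions delta3 (p, q, r) of the chains p <= q <= r span I^3(P, R), so it
   suffices that D kills each of them.  From
   delta3 (p, q, r) = delta3 (p, q, q) * delta3 (q, q, r)
   and the Leibniz rule, D (delta3 (p, q, r)) is supported on triples with middle entry q,
   and it vanishes once D (delta3 (a, b, b)) vanishes at every (x, b, b) and
   D (delta3 (b, b, c)) at every (b, b, x).  For x <> a, differentiating
   delta3 (x, x, b) * delta3 (a, b, b) = 0 at (x, b, b) gives the first claim; for x = a,
   differentiate delta3 (a, a, b) * delta3 (a, b, b) = sum_(a <= y <= b) delta3 (a, y, b)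
   at (a, b, b) and (a, a, b).  The second claim is symmetric. *)

Lemma sum_delta (T : finType) (R : pzSemiRingType) (C : pred T) (q : T) (F : T -> R) :
  \sum_(y | C y) (y == q)%:R * F y = (C q)%:R * F q.
Proof.
rewrite big_mkcond (bigD1 q) //= eqxx mul1r big1 ?addr0 => [|y /negbTE ->].
  by case: (C q); rewrite ?mul1r ?mul0r.
by rewrite mul0r; case: (C y).
Qed.

Lemma natr_eq3 (R : pzSemiRingType) (T : eqType) (x y z p q r : T) :
  ((x, y, z) == (p, q, r))%:R = (x == p)%:R * (y == q)%:R * (z == r)%:R :> R.
Proof. by rewrite !xpair_eqE -!mulnb !natrM. Qed.

Section Incidence3.
Variables (d : Order.disp_t) (P : finPOrderType d) (R : comPzRingType).
Implicit Types (f g : I3 P R) (x y z p q r : P).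

Lemma I3at_chain f x y z (h : chain3 (x, y, z)) : I3at f x y z = f (exist _ (x, y, z) h).
Proof.
rewrite /I3at; case: {-}_ / boolP => h' /=; last by rewrite h in h'.
by congr (f _); apply: val_inj.
Qed.

Lemma I3at_nchain f x y z : ~~ chain3 (x, y, z) -> I3at f x y z = 0.
Proof. by move=> h; rewrite /I3at; case: {-}_ / boolP => h' //; rewrite h' in h. Qed.

Lemma eq_I3 f g :
  (forall x y z, chain3 (x, y, z) -> I3at f x y z = I3at g x y z) -> f = g.
Proof. by move=> fg; apply/ffunP => -[[[x y] z] h]; rewrite -!(I3at_chain _ h) fg. Qed.

Lemma I3at0 x y z : I3at (0 : I3 P R) x y z = 0.
Proof.
have [h | /I3at_nchain //] := boolP (chain3 (x, y, z)).
by rewrite I3at_chain ffunE.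
Qed.

Lemma I3atD f g x y z : I3at (f + g) x y z = I3at f x y z + I3at g x y z.
Proof.
have [h | h] := boolP (chain3 (x, y, z)); last by rewrite !I3at_nchain ?addr0.
by rewrite !I3at_chain ffunE.
Qed.

Lemma I3at_sum (I : Type) (s : seq I) (C : pred I) (F : I -> I3 P R) x y z :
  I3at (\sum_(i <- s | C i) F i) x y z = \sum_(i <- s | C i) I3at (F i) x y z.
Proof.
exact: (big_morph (fun f => I3at f x y z) (fun f g => I3atD f g x y z) (I3at0 x y z)).
Qed.

Lemma I3at_mul f g x y z :
  I3at (I3mul f g) x y z =
  \sum_(y1 | (x <= y1 <= y)%O) \sum_(y2 | (y <= y2 <= z)%O)
    I3at f x y1 y2 * I3at g y1 y2 z.
Proof.
have [h | h] := boolP (chain3 (x, y, z)); first by rewrite I3at_chain ffunE.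
rewrite I3at_nchain // big1 // => y1 /andP[xy1 y1y]; rewrite big1 // => y2 /andP[yy2 y2z].
by move: h; rewrite /chain3 /= (le_trans xy1 y1y) (le_trans yy2 y2z).
Qed.

Definition delta3 (t : P * P * P) : I3 P R := [ffun s => (sval s == t)%:R].

Lemma I3at_delta3 t x y z :
  chain3 (x, y, z) || chain3 t -> I3at (delta3 t) x y z = ((x, y, z) == t)%:R.
Proof.
have [h _ | h /= ht] := boolP (chain3 (x, y, z)); first by rewrite I3at_chain ffunE.
by rewrite I3at_nchain //; case: eqP => // e; move: ht; rewrite -e (negbTE h).
Qed.

Lemma I3at_delta3_mull p q r g x y z :
  I3at (I3mul (delta3 (p, q, r)) g) x y z =
  (x == p)%:R * (x <= q <= y)%O%:R * (y <= r <= z)%O%:R * I3at g q r z.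
Proof.
rewrite I3at_mul.
transitivity (\sum_(y1 | (x <= y1 <= y)%O) (y1 == q)%:R * ((x == p)%:R *
  \sum_(y2 | (y <= y2 <= z)%O) (y2 == r)%:R * I3at g y1 y2 z)).
  apply: eq_bigr => y1 /andP[xy1 y1y]; rewrite !mulr_sumr.
  apply: eq_bigr => y2 /andP[yy2 _].
  rewrite I3at_delta3 ?natr_eq3; first ring.
  by rewrite /chain3 /= xy1 (le_trans y1y yy2).
by rewrite !sum_delta; ring.
Qed.

Lemma I3at_delta3_mulr p q r g x y z :
  I3at (I3mul g (delta3 (p, q, r))) x y z =
  (z == r)%:R * (x <= p <= y)%O%:R * (y <= q <= z)%O%:R * I3at g x p q.
Proof.
rewrite I3at_mul.
transitivity (\sum_(y1 | (x <= y1 <= y)%O) (y1 == p)%:R * ((z == r)%:R *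
  \sum_(y2 | (y <= y2 <= z)%O) (y2 == q)%:R * I3at g x y1 y2)).
  apply: eq_bigr => y1 /andP[_ y1y]; rewrite !mulr_sumr.
  apply: eq_bigr => y2 /andP[yy2 y2z].
  rewrite I3at_delta3 ?natr_eq3; first ring.
  by rewrite /chain3 /= (le_trans y1y yy2) y2z.
by rewrite !sum_delta; ring.
Qed.

Lemma natr_between_mid x y z q :
  y != q -> (x <= q <= y)%O%:R * (y <= q <= z)%O%:R = 0 :> R.
Proof.
move=> yq; case: (boolP (q <= y)%O) => qy; case: (boolP (y <= q)%O) => yq';
  rewrite ?andbF ?andFb ?mul0r ?mulr0 //.
by move: yq; rewrite eq_le qy yq'.
Qed.

Lemma delta3_factor p q r :
  (p <= q <= r)%O -> delta3 (p, q, r) = I3mul (delta3 (p, q, q)) (delta3 (q, q, r)).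
Proof.
move=> /andP[pq qr]; have cqr : chain3 (q, q, r) by rewrite /chain3 /= lexx qr.
apply: eq_I3 => x y z xyz.
rewrite I3at_delta3_mull !I3at_delta3 ?xyz ?cqr ?orbT // !natr_eq3 !eqxx mul1r.
have [->|yq] := eqVneq y q; last first.
  by rewrite -[in RHS](mulrA (x == p)%:R) natr_between_mid // !(mulr0, mul0r).
case: (eqVneq x p) => [->|]; last by rewrite !mul0r.
case: (eqVneq z r) => [->|]; last by rewrite !mulr0.
by rewrite pq qr !lexx /= !mul1r.
Qed.

Lemma delta3_mul_diag a b :
  (a <= b)%O ->
  I3mul (delta3 (a, a, b)) (delta3 (a, b, b)) = \sum_(y | (a <= y <= b)%O) delta3 (a, y, b).
Proof.
move=> ab; have cabb : chain3 (a, b, b) by rewrite /chain3 /= ab lexx.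
apply: eq_I3 => x y z xyz; rewrite I3at_delta3_mull I3at_sum.
under eq_bigr => i _ do rewrite I3at_delta3 ?xyz // natr_eq3 (eq_sym y) mulrAC mulrC.
rewrite sum_delta I3at_delta3 ?cabb ?orbT // natr_eq3 !eqxx !mul1r.
case: (eqVneq x a) => [->|]; last by rewrite !(mul0r, mulr0).
case: (eqVneq z b) => [->|]; last by rewrite !mulr0.
by rewrite !lexx /= andbT !(mul1r, mulr1) -natrM mulnb.
Qed.

Lemma I3_delta3_expansion f : f = \sum_(t : P3 P) [ffun s => f t * delta3 (sval t) s].
Proof.
apply/ffunP => s; rewrite sum_ffunE (bigD1 s) //= !ffunE eqxx mulr1.
rewrite big1 ?addr0 // => t ts.
by rewrite !ffunE val_eqE eq_sym (negbTE ts) mulr0.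
Qed.

Section Derivation.
Variable D : I3 P R -> I3 P R.
Hypothesis HD : is_derivation D.

Lemma derivationD f g : D (f + g) = D f + D g.
Proof.
case: HD => Dadd _ _.
have -> : f + g = [ffun t => f t + g t] by apply/ffunP => t; rewrite !ffunE.
by rewrite Dadd; apply/ffunP => t; rewrite !ffunE.
Qed.

Lemma derivation0 : D 0 = 0.
Proof. by apply: (addrI (D 0)); rewrite -derivationD !addr0. Qed.

Lemma derivation_sum (I : Type) (s : seq I) (C : pred I) (F : I -> I3 P R) :
  D (\sum_(i <- s | C i) F i) = \sum_(i <- s | C i) D (F i).
Proof. exact: (big_morph D derivationD derivation0). Qed.

Lemma derivationZ (c : R) f : D [ffun t => c * f t] = [ffun t => c * D f t].
Proof. by case: HD. Qed.

Lemma derivationM f g : D (I3mul f g) = I3mul (D f) g + I3mul f (D g).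
Proof. by case: HD. Qed.

Lemma derivation_delta3_offmid p q r x y z :
  (p <= q <= r)%O -> y != q -> I3at (D (delta3 (p, q, r))) x y z = 0.
Proof.
move=> pqr yq; rewrite delta3_factor // derivationM I3atD.
rewrite I3at_delta3_mulr I3at_delta3_mull -!(mulrA (_ == _)%:R).
by rewrite natr_between_mid // !(mulr0, mul0r) addr0.
Qed.

Lemma derivation_delta3_diag a b :
  (a <= b)%O ->
  I3at (D (delta3 (a, a, b))) a a b = 0 /\ I3at (D (delta3 (a, b, b))) a b b = 0.
Proof.
move=> ab; set X := I3at _ a a b; set Y := I3at _ a b b.
have sum_offmid u v : (a <= u <= b)%O ->
    \sum_(y | (a <= y <= b)%O) I3at (D (delta3 (a, y, b))) a u v =
    I3at (D (delta3 (a, u, b))) a u v.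
  move=> aub; rewrite (bigD1 u) //= big1 ?addr0 // => y /andP[ayb yu].
  by apply: derivation_delta3_offmid; rewrite // eq_sym.
have := congr1 D (delta3_mul_diag ab); rewrite derivationM derivation_sum.
move=> /[dup] /(congr1 (fun f => I3at f a a b)) eqaab /(congr1 (fun f => I3at f a b b)).
rewrite !I3atD !I3at_delta3_mulr !I3at_delta3_mull !I3at_sum in eqaab *.
rewrite !sum_offmid ?lexx ?ab // in eqaab *.
rewrite !eqxx /= !mul1r -/X -/Y in eqaab *.
move=> eqabb; split.
- by apply: (addIr Y); rewrite add0r.
- by apply: (addrI X); rewrite addr0.
Qed.

Lemma derivation_delta3_right a b x :
  (a <= b)%O -> I3at (D (delta3 (a, b, b))) x b b = 0.
Proof.
move=> ab; have [->|xa] := eqVneq x a; first by case: (derivation_delta3_diag ab).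
have [/andP[/= xb _] | /I3at_nchain //] := boolP (chain3 (x, b, b)).
have cabb : chain3 (a, b, b) by rewrite /chain3 /= ab lexx.
have vanish : I3mul (delta3 (x, x, b)) (delta3 (a, b, b)) = 0.
  apply: eq_I3 => u v w _.
  rewrite I3at_delta3_mull I3at0 I3at_delta3 ?cabb ?orbT // natr_eq3.
  by rewrite (negbTE xa) !(mul0r, mulr0).
have := congr1 (fun f => I3at (D f) x b b) vanish.
rewrite /= derivation0 derivationM I3at0 I3atD I3at_delta3_mulr I3at_delta3_mull.
rewrite derivation_delta3_offmid ?lexx ?xb 1?eq_sym //.
by rewrite !eqxx /= !(mul1r, mulr0) add0r.
Qed.

Lemma derivation_delta3_left b c x :
  (b <= c)%O -> I3at (D (delta3 (b, b, c))) b b x = 0.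
Proof.
move=> bc; have [->|xc] := eqVneq x c; first by case: (derivation_delta3_diag bc).
have [/andP[_ /= bx] | /I3at_nchain //] := boolP (chain3 (b, b, x)).
have cbxx : chain3 (b, x, x) by rewrite /chain3 /= bx lexx.
have vanish : I3mul (delta3 (b, b, c)) (delta3 (b, x, x)) = 0.
  apply: eq_I3 => u v w _.
  rewrite I3at_delta3_mull I3at0 I3at_delta3 ?cbxx ?orbT // natr_eq3.
  by rewrite (eq_sym c) (negbTE xc) !(mul0r, mulr0).
have := congr1 (fun f => I3at (D f) b b x) vanish.
rewrite /= derivation0 derivationM I3at0 I3atD I3at_delta3_mulr I3at_delta3_mull.
rewrite (derivation_delta3_offmid b x cbxx) 1?eq_sym //.
by rewrite !eqxx !lexx bx /= !(mul1r, mulr0) addr0.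
Qed.

Lemma derivation_delta3 t : chain3 t -> D (delta3 t) = 0.
Proof.
case: t => [[a b] c] abc; have /andP[/= ab bc] := abc.
rewrite delta3_factor // derivationM; apply: eq_I3 => x y z _.
rewrite I3atD I3at_delta3_mulr I3at_delta3_mull I3at0.
by rewrite derivation_delta3_right // derivation_delta3_left // !mulr0 addr0.
Qed.

Lemma derivation_eq0 f : D f = 0.
Proof.
rewrite [f]I3_delta3_expansion derivation_sum big1 // => t _.
rewrite derivationZ derivation_delta3 ?(valP t) //.
by apply/ffunP => s; rewrite !ffunE mulr0.
Qed.

End Derivation.
End Incidence3.

Theorem theorem4p7 (d : Order.disp_t) (P : finPOrderType d) (R : comPzRingType)
  (D : I3 P R -> I3 P R) :
  is_derivation D -> forall f : I3 P R, D f = [ffun => 0%R] :> I3 P R.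
Proof.
move=> HD f; rewrite (derivation_eq0 HD f).
by apply/ffunP => s; rewrite !ffunE.
Qed.
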